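(* Let $X$ be a proper geodesic metric space, $Y$ a compact metric space, and $f:X\to Y$ a continuous map. Then $f$ extends to a continuous map $\bar f:h_0X\to Y$ if and only if $f$ is uniformly continuous.
   Context: The $C_0$ coarse structure on a metric space $(X,d)$ consists of all sets $E\subset X\times X$ such that for every $\epsilon>0$ there is a compact $K\subset X$ with $d(x,y)<\epsilon$ for all $(x,y)\in E\setminus(K\times K)$ (controlled sets). A bounded continuous $f:X\to\mathbb{C}$ is a Higson function if for every controlled set $E$ the function $(x,y)\mapsto f(x)-f(y)$ restricted to $E$ vanishes at infinity; $C_{h_0}(X)$ denotes the algebra of bounded continuous Higson functions. The $C_0$ Higson compactification $h_0X$ is the compactification of $X$ with $C(h_0X)=C_{h_0}(X)$ (i.e., exactly the bounded continuous functions on $X$ lying in $C_{h_0}(X)$ extend continuously to $h_0X$); $\nu_0X=h_0X\setminus X$ is the $C_0$ Higson corona. Uniformly continuous: there is a monotone $\omega$ with $\omega(t)\to0$ as $t\to0$ and $d(f(x),f(x'))\le\omega(d(x,x'))$. *)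

From Stdlib Require Import Reals List.
Open Scope R_scope.

Record MetricSpace := {
  mcarrier :> Type;
  mdist : mcarrier -> mcarrier -> R;
  mdist_nonneg : forall x y, 0 <= mdist x y;
  mdist_eq0 : forall x y, mdist x y = 0 <-> x = y;
  mdist_sym : forall x y, mdist x y = mdist y x;
  mdist_tri : forall x y z, mdist x z <= mdist x y + mdist y z
}.
Arguments mdist {m} _ _.

Record TopSpace := {
  tcarrier :> Type;
  topen : (tcarrier -> Prop) -> Prop;
  topen_full : topen (fun _ => True);
  topen_inter : forall U V, topen U -> topen V -> topen (fun x => U x /\ V x);
  topen_union : forall F : (tcarrier -> Prop) -> Prop,
      (forall U, F U -> topen U) -> topen (fun x => exists U, F U /\ U x)
}.
Arguments topen {t} _.

Definition metric_open (M : MetricSpace) (U : M -> Prop) : Prop :=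
  forall x, U x -> exists r, 0 < r /\ forall y, mdist x y < r -> U y.

Lemma metric_open_full (M : MetricSpace) : metric_open M (fun _ => True).
Proof. intros x _; exists 1; split; [apply Rlt_0_1| auto]. Qed.

Lemma metric_open_inter (M : MetricSpace) U V :
  metric_open M U -> metric_open M V -> metric_open M (fun x => U x /\ V x).
Proof.
  intros HU HV x [Ux Vx].
  destruct (HU x Ux) as [r1 [Hr1 H1]]. destruct (HV x Vx) as [r2 [Hr2 H2]].
  exists (Rmin r1 r2); split.
  - apply Rmin_glb_lt; auto.
  - intros y Hy; split.
    + apply H1; eapply Rlt_le_trans; [exact Hy| apply Rmin_l].
    + apply H2; eapply Rlt_le_trans; [exact Hy| apply Rmin_r].
Qed.

Lemma metric_open_union (M : MetricSpace) (F : (M -> Prop) -> Prop) :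
  (forall U, F U -> metric_open M U) ->
  metric_open M (fun x => exists U, F U /\ U x).
Proof.
  intros HF x [U [FU Ux]].
  destruct (HF U FU x Ux) as [r [Hr H]].
  exists r; split; auto. intros y Hy; exists U; auto.
Qed.

Definition metric_top (M : MetricSpace) : TopSpace :=
  {| tcarrier := M; topen := metric_open M;
     topen_full := metric_open_full M;
     topen_inter := metric_open_inter M;
     topen_union := metric_open_union M |}.

Definition compact_in (T : TopSpace) (K : T -> Prop) : Prop :=
  forall F : (T -> Prop) -> Prop,
    (forall U, F U -> topen U) ->
    (forall x, K x -> exists U, F U /\ U x) ->
    exists l : list (T -> Prop),
      (forall U, In U l -> F U) /\
      (forall x, K x -> exists U, In U l /\ U x).

Definition compact_space (T : TopSpace) : Prop := compact_in T (fun _ => True).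

Definition hausdorff (T : TopSpace) : Prop :=
  forall x y : T, x <> y ->
    exists U V, topen U /\ topen V /\ U x /\ V y /\ forall z, ~ (U z /\ V z).

Definition continuous (S T : TopSpace) (f : S -> T) : Prop :=
  forall V : T -> Prop, topen V -> topen (fun x => V (f x)).

Definition is_compactification (X K : TopSpace) (i : X -> K) : Prop :=
  compact_space K /\ hausdorff K /\
  continuous X K i /\
  (forall x y, i x = i y -> x = y) /\
  (forall U : X -> Prop, topen U ->
      exists V : K -> Prop, topen V /\ forall x, U x <-> V (i x)) /\
  (forall V : K -> Prop, topen V -> (exists k, V k) -> exists x, V (i x)).

Definition Cplx := (R * R)%type.
Definition cdist (z w : Cplx) : R :=
  sqrt ((fst z - fst w) ^ 2 + (snd z - snd w) ^ 2).
Definition cnorm (z : Cplx) : R := sqrt (fst z ^ 2 + snd z ^ 2).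

Definition Copen (U : Cplx -> Prop) : Prop :=
  forall z, U z -> exists r, 0 < r /\ forall w, cdist z w < r -> U w.
Definition continuous_C (T : TopSpace) (g : T -> Cplx) : Prop :=
  forall U, Copen U -> topen (fun x => U (g x)).

Definition C0_controlled (X : MetricSpace) (E : X -> X -> Prop) : Prop :=
  forall eps, 0 < eps ->
    exists K : X -> Prop, compact_in (metric_top X) K /\
      forall x y, E x y -> ~ (K x /\ K y) -> mdist x y < eps.

Definition vanishes_at_infinity_on (X : MetricSpace) (E : X -> X -> Prop)
  (h : X -> X -> R) : Prop :=
  forall eps, 0 < eps ->
    exists K : X -> Prop, compact_in (metric_top X) K /\
      forall x y, E x y -> ~ (K x /\ K y) -> h x y < eps.

Definition C_bounded (X : Type) (g : X -> Cplx) : Prop :=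
  exists B, forall x, cnorm (g x) <= B.

Definition C_h0 (X : MetricSpace) (g : X -> Cplx) : Prop :=
  C_bounded X g /\ continuous_C (metric_top X) g /\
  forall E, C0_controlled X E ->
    vanishes_at_infinity_on X E (fun x y => cdist (g x) (g y)).

(* (K, i) is the C_0 Higson compactification h_0X: a compactification
   such that the bounded continuous functions on X extending continuously
   to K are exactly those of C_{h_0}(X). *)
Definition is_h0_compactification (X : MetricSpace) (K : TopSpace)
  (i : X -> K) : Prop :=
  is_compactification (metric_top X) K i /\
  forall g : X -> Cplx, C_bounded X g -> continuous_C (metric_top X) g ->
    (C_h0 X g <-> exists G : K -> Cplx, continuous_C K G /\
                                         forall x, G (i x) = g x).

Definition proper_metric (X : MetricSpace) : Prop :=
  forall (x : X) r, compact_in (metric_top X) (fun y => mdist x y <= r).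

Definition geodesic (X : MetricSpace) : Prop :=
  forall x y : X, exists gam : R -> X,
    gam 0 = x /\ gam (mdist x y) = y /\
    forall s t, 0 <= s <= mdist x y -> 0 <= t <= mdist x y ->
      mdist (gam s) (gam t) = Rabs (s - t).

Definition uniformly_continuous (X Y : MetricSpace) (f : X -> Y) : Prop :=
  exists omega : R -> R,
    (forall s t, 0 <= s -> s <= t -> omega s <= omega t) /\
    (forall eps, 0 < eps -> exists delta, 0 < delta /\
        forall t, 0 < t < delta -> Rabs (omega t) < eps) /\
    forall x x', mdist (f x) (f x') <= omega (mdist x x').

From Stdlib Require Import Reals Lra Lia List Classical ClassicalEpsilon FunctionalExtensionality PropExtensionality.
Open Scope R_scope.

(* For y in Y write  d_y f : x |-> d(y, f x), a bounded continuous
   function on X (Y is compact).  Everything rests on these functions: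
   - if f extends to F : h_0X -> Y, then d_y F extends d_y f, so every d_y f is
     a Higson function; testing the Higson property on the C_0-controlled set of
     pairs (a_n, b_n) with d(a_n, b_n) -> 0 and d(f a_n, f b_n) > eps, together
     with uniform continuity of f on compacta (Heine-Cantor) and a finite net
     of Y, shows that f is uniformly continuous (eps-delta form, then a
     modulus omega is built as a supremum);
   - if f is uniformly continuous, each d_y f is Higson, hence extends to a
     continuous G_y on h_0X; for a point k of h_0X the function y |-> G_y(k)
     is, by density of X, 1-Lipschitz, satisfies d(y,y') <= G_y(k) + G_y'(k)
     and has infimum 0, so by compactness of Y it vanishes at a unique point
     F(k), and G_y(k) = d(y, F(k)); continuity of the G_y gives that of F. *)

Lemma list_ex_min {A} (l : list A) (P : A -> R -> Prop) :
  (forall a d d', P a d -> 0 < d' <= d -> P a d') ->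
  (forall a, In a l -> exists d, 0 < d /\ P a d) ->
  exists d, 0 < d /\ forall a, In a l -> P a d.
Proof.
  intros Hmono; induction l as [|a l IH]; intros H.
  - exists 1; split; [lra | intros a []].
  - destruct (H a (or_introl eq_refl)) as [d1 [Hd1 P1]].
    destruct IH as [d2 [Hd2 P2]]; [intros b Hb; apply H; right; auto|].
    assert (Hmin : 0 < Rmin d1 d2) by (apply Rmin_glb_lt; auto).
    exists (Rmin d1 d2); split; auto.
    intros b [<- | Hb].
    + apply Hmono with d1; auto; split; [auto | apply Rmin_l].
    + apply Hmono with d2; auto; split; [auto | apply Rmin_r].
Qed.

Lemma list_ex_max {A} (l : list A) (P : A -> R -> Prop) :
  (forall a d d', P a d -> d <= d' -> P a d') ->
  (forall a, In a l -> exists d, P a d) ->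
  exists d, forall a, In a l -> P a d.
Proof.
  intros Hmono; induction l as [|a l IH]; intros H.
  - exists 0; intros a [].
  - destruct (H a (or_introl eq_refl)) as [d1 P1].
    destruct IH as [d2 P2]; [intros b Hb; apply H; right; auto|].
    exists (Rmax d1 d2); intros b [<- | Hb].
    + apply Hmono with d1; auto; apply Rmax_l.
    + apply Hmono with d2; auto; apply Rmax_r.
Qed.

Lemma list_choose {A B} (l : list A) (P : A -> B -> Prop) :
  (forall a, In a l -> exists b, P a b) ->
  exists lb, forall a, In a l -> exists b, In b lb /\ P a b.
Proof.
  induction l as [|a l IH]; intros H.
  - exists nil; intros a [].
  - destruct (H a (or_introl eq_refl)) as [b Pb].
    destruct IH as [lb Hl]; [intros c Hc; apply H; right; auto|].
    exists (b :: lb); intros c [<- | Hc].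
    + exists b; split; [left|]; auto.
    + destruct (Hl c Hc) as [b' [Hb' Pb']]; exists b'; split; [right|]; auto.
Qed.

Lemma topen_ext (T : TopSpace) (P Q : T -> Prop) :
  (forall x, P x <-> Q x) -> topen P -> topen Q.
Proof.
  intros H HP.
  assert (E : P = Q) by (extensionality x; apply propositional_extensionality; auto).
  subst; auto.
Qed.

Lemma topen_local (T : TopSpace) (P : T -> Prop) :
  (forall k, P k -> exists W, topen W /\ W k /\ forall k', W k' -> P k') ->
  topen P.
Proof.
  intros Hloc.
  apply topen_ext with
    (fun k => exists W, (topen W /\ forall k', W k' -> P k') /\ W k).
  - intros k; split.
    + intros [W [[_ HW] Wk]]; auto.
    + intros Pk; destruct (Hloc k Pk) as [W [HW [Wk Hsub]]]; eauto.
  - apply topen_union; intros W [HW _]; auto.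
Qed.

Lemma topen_list_inter (T : TopSpace) {A} (l : list A) (W : A -> T -> Prop) :
  (forall a, topen (W a)) -> topen (fun k => forall a, In a l -> W a k).
Proof.
  intros HW; induction l as [|a l IH].
  - apply topen_ext with (fun _ => True); [|apply topen_full].
    intros x; split; [intros _ a [] | auto].
  - apply topen_ext with (fun k => W a k /\ (forall b, In b l -> W b k)).
    + intros x; split.
      * intros [H1 H2] b [<- | Hb]; auto.
      * intros H; split; [apply H; left | intros b Hb; apply H; right]; auto.
    + apply topen_inter; auto.
Qed.

Lemma mdist_refl (M : MetricSpace) (x : M) : mdist x x = 0.
Proof. apply mdist_eq0; reflexivity. Qed.

Lemma ball_open (M : MetricSpace) (x : M) r :
  metric_open M (fun z => mdist x z < r).
Proof.
  intros y Hy; exists (r - mdist x y); split; [lra|].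
  intros z Hz; pose proof (mdist_tri M x y z); lra.
Qed.

Lemma dist_diff (M : MetricSpace) (y w w' : M) :
  Rabs (mdist y w - mdist y w') <= mdist w w'.
Proof.
  apply Rabs_le.
  pose proof (mdist_tri M y w w'); pose proof (mdist_tri M y w' w).
  rewrite (mdist_sym M w' w) in *; lra.
Qed.

Lemma continuous_at_point (X Y : MetricSpace) (f : X -> Y) :
  continuous (metric_top X) (metric_top Y) f ->
  forall x eps, 0 < eps -> exists s, 0 < s /\
    forall x', mdist x x' < s -> mdist (f x) (f x') < eps.
Proof.
  intros Hf x eps Heps.
  destruct (Hf _ (ball_open Y (f x) eps) x) as [s [Hs Hball]].
  - simpl; rewrite mdist_refl; auto.
  - exists s; auto.
Qed.

Lemma cdist_real a b : cdist (a, 0) (b, 0) = Rabs (a - b).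
Proof.
  unfold cdist; simpl; rewrite <- sqrt_Rsqr_abs; f_equal; unfold Rsqr; ring.
Qed.

Lemma cnorm_real a : cnorm (a, 0) = Rabs a.
Proof.
  unfold cnorm; simpl; rewrite <- sqrt_Rsqr_abs; f_equal; unfold Rsqr; ring.
Qed.

Lemma cdist_fst z w : Rabs (fst z - fst w) <= cdist z w.
Proof.
  unfold cdist; rewrite <- sqrt_Rsqr_abs; apply sqrt_le_1_alt.
  unfold Rsqr; simpl; pose proof (pow2_ge_0 (snd z - snd w)); nra.
Qed.

Lemma Copen_fst (P : R -> Prop) :
  (forall a, P a -> exists r, 0 < r /\ forall b, Rabs (b - a) < r -> P b) ->
  Copen (fun z => P (fst z)).
Proof.
  intros H z Hz; destruct (H _ Hz) as [r [Hr Hb]]; exists r; split; auto.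
  intros w Hw; apply Hb; rewrite Rabs_minus_sym.
  eapply Rle_lt_trans; [apply cdist_fst | exact Hw].
Qed.

Lemma Copen_fst_lt r : Copen (fun z => fst z < r).
Proof.
  apply (Copen_fst (fun a => a < r)); intros a Ha; exists (r - a); split; [lra|].
  intros b Hb; apply Rabs_def2 in Hb; lra.
Qed.

Lemma Copen_fst_gt r : Copen (fun z => r < fst z).
Proof.
  apply (Copen_fst (fun a => r < a)); intros a Ha; exists (a - r); split; [lra|].
  intros b Hb; apply Rabs_def2 in Hb; lra.
Qed.

Lemma Copen_fst_near c r : Copen (fun z => Rabs (fst z - c) < r).
Proof.
  apply (Copen_fst (fun a => Rabs (a - c) < r)); intros a Ha.
  exists (r - Rabs (a - c)); split; [lra|].
  intros b Hb; pose proof (Rabs_triang (b - a) (a - c)).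
  replace (b - a + (a - c)) with (b - c) in * by ring; lra.
Qed.

Lemma compact_net (Y : MetricSpace) : compact_space (metric_top Y) ->
  forall r, 0 < r -> exists ys : list Y,
    forall z, exists y, In y ys /\ mdist y z < r.
Proof.
  intros HY r Hr.
  destruct (HY (fun U => exists y, U = fun z => mdist y z < r)) as [l [Hl Hcov]].
  - intros U [y ->]; apply ball_open.
  - intros z _; exists (fun w => mdist z w < r); split; [exists z; auto|].
    simpl; rewrite mdist_refl; auto.
  - destruct (list_choose l (fun U y => U = fun z => mdist y z < r)) as [ys Hys].
    { intros U HU; apply Hl; auto. }
    exists ys; intros z; destruct (Hcov z I) as [U [HU Uz]].
    destruct (Hys U HU) as [y [Hy ->]]; eauto.
Qed.

Lemma compact_bounded (Y : MetricSpace) : compact_space (metric_top Y) ->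
  forall y : Y, exists B, forall z, mdist y z <= B.
Proof.
  intros HY y; destruct (compact_net Y HY 1 Rlt_0_1) as [ys Hys].
  destruct (list_ex_max ys (fun y' B => mdist y y' + 1 <= B)) as [B HB].
  - intros; lra.
  - intros a _; exists (mdist y a + 1); lra.
  - exists B; intros z; destruct (Hys z) as [y' [Hy' Hd]].
    pose proof (HB y' Hy'); pose proof (mdist_tri Y y y' z); lra.
Qed.

Lemma compact_diameter (Y : MetricSpace) : compact_space (metric_top Y) ->
  exists D, 0 <= D /\ forall y y' : Y, mdist y y' <= D.
Proof.
  intros HY; destruct (classic (exists y0 : Y, True)) as [[y0 _] | Hempty].
  - destruct (compact_bounded Y HY y0) as [B HB]; exists (2 * B).
    pose proof (HB y0); pose proof (mdist_nonneg Y y0 y0); split; [lra|].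
    intros y y'; pose proof (mdist_tri Y y y0 y'); rewrite (mdist_sym Y y y0) in *.
    pose proof (HB y); pose proof (HB y'); lra.
  - exists 0; split; [lra|]; intros y; exfalso; apply Hempty; eauto.
Qed.

Lemma heine_cantor (X Y : MetricSpace) (f : X -> Y) :
  continuous (metric_top X) (metric_top Y) f ->
  forall C, compact_in (metric_top X) C -> forall eps, 0 < eps ->
  exists d, 0 < d /\ forall u v, C u -> C v -> mdist u v < d ->
    mdist (f u) (f v) < eps.
Proof.
  intros Hf C HC eps Heps.
  set (good := fun x r => 0 < r /\
         forall z, mdist x z < 2 * r -> mdist (f x) (f z) < eps / 2).
  destruct (HC (fun U => exists x r, good x r /\ U = (fun z => mdist x z < r)))
    as [l [Hl Hcov]].
  - intros U [x [r [_ ->]]]; apply ball_open.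
  - intros x _; destruct (continuous_at_point X Y f Hf x (eps / 2)) as [s [Hs Hx]];
      [lra|].
    exists (fun z => mdist x z < s / 2); split.
    + exists x, (s / 2); split; auto; split; [lra|]; intros z Hz; apply Hx; lra.
    + simpl; rewrite mdist_refl; lra.
  - destruct (list_ex_min l (fun U d => exists x r, good x r /\
                U = (fun z => mdist x z < r) /\ d <= r)) as [d [Hd HP]].
    + intros U d d' [x [r [H1 [H2 H3]]]] Hd'; exists x, r; split; [|split]; auto; lra.
    + intros U HU; destruct (Hl U HU) as [x [r [Hgood ->]]].
      exists r; split; [apply Hgood|]; exists x, r; split; [|split]; auto; lra.
    + exists d; split; auto; intros u v Cu Cv Huv.
      destruct (Hcov u Cu) as [U [HU Uu]].
      destruct (HP U HU) as [x [r [[_ Hosc] [-> Hdr]]]]; simpl in Uu.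
      pose proof (mdist_tri X x u v).
      pose proof (Hosc u ltac:(lra)); pose proof (Hosc v ltac:(lra)).
      pose proof (mdist_tri Y (f u) (f x) (f v)); rewrite (mdist_sym Y (f u) (f x)) in *.
      lra.
Qed.

Definition eps_delta_uc (X Y : MetricSpace) (f : X -> Y) : Prop :=
  forall eps, 0 < eps -> exists d, 0 < d /\
    forall x x', mdist x x' < d -> mdist (f x) (f x') <= eps.

Lemma uniformly_continuous_eps_delta (X Y : MetricSpace) (f : X -> Y) :
  uniformly_continuous X Y f -> eps_delta_uc X Y f.
Proof.
  intros [om [_ [Hom Hmod]]] eps Heps.
  destruct (Hom eps Heps) as [d [Hd Hsmall]]; exists d; split; auto.
  intros x x' Hxx'.
  destruct (Req_dec (mdist x x') 0) as [Hzero | Hpos].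
  - apply mdist_eq0 in Hzero; subst; rewrite mdist_refl; lra.
  - pose proof (mdist_nonneg X x x').
    eapply Rle_trans; [apply Hmod|].
    eapply Rle_trans; [apply Rle_abs | left; apply Hsmall; lra].
Qed.

(* Conversely, for a bounded codomain the modulus
   omega(t) = sup { d(f x, f x') | d(x, x') <= t } works. *)
Lemma eps_delta_uniformly_continuous (X Y : MetricSpace) (f : X -> Y) (D : R) :
  0 <= D -> (forall y y' : Y, mdist y y' <= D) ->
  eps_delta_uc X Y f -> uniformly_continuous X Y f.
Proof.
  intros HD0 HD Huc.
  set (S := fun t r => r = 0 \/
              exists x x', mdist x x' <= t /\ r = mdist (f x) (f x')).
  assert (Hbound : forall t, bound (S t)).
  { intros t; exists D; intros r [-> | [x [x' [_ ->]]]]; auto. }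
  assert (Hinhab : forall t, exists r, S t r) by (intros t; exists 0; left; auto).
  exists (fun t => proj1_sig (completeness (S t) (Hbound t) (Hinhab t))).
  split; [|split].
  - intros s t Hs Hst.
    destruct (completeness (S s) (Hbound s) (Hinhab s)) as [ms [Hs_upper Hleast]].
    destruct (completeness (S t) (Hbound t) (Hinhab t)) as [mt [Hupper Ht_least]].
    simpl; clear Hs_upper Ht_least.
    apply Hleast; intros r Hr; apply Hupper.
    destruct Hr as [-> | [x [x' [H1 H2]]]]; [left; auto | right; exists x, x'; split; auto; lra].
  - intros eps Heps; destruct (Huc (eps / 2)) as [d [Hd Hclose]]; [lra|].
    exists d; split; auto; intros t Ht.
    destruct (completeness (S t) (Hbound t) (Hinhab t)) as [m [Hupper Hleast]].
    simpl.
    assert (0 <= m) by (apply Hupper; left; auto).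
    assert (m <= eps / 2).
    { apply Hleast; intros r [-> | [x [x' [H1 ->]]]]; [lra | apply Hclose; lra]. }
    rewrite Rabs_pos_eq; lra.
  - intros x x'.
    destruct (completeness (S (mdist x x')) (Hbound _) (Hinhab _)) as [m [Hupper Hleast]].
    simpl; apply Hupper; right; exists x, x'; split; [lra | auto].
Qed.

Definition dist_to {Y : MetricSpace} (y : Y) {T : Type} (F : T -> Y) : T -> Cplx :=
  fun t => (mdist y (F t), 0).

Definition higson_vanishing (X : MetricSpace) (g : X -> Cplx) : Prop :=
  forall E, C0_controlled X E ->
    vanishes_at_infinity_on X E (fun x y => cdist (g x) (g y)).

Lemma dist_to_continuous (T : TopSpace) (Y : MetricSpace) (F : T -> Y) (y : Y) :
  continuous T (metric_top Y) F -> continuous_C T (dist_to y F).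
Proof.
  intros HF U HU; apply (HF (fun w => U (mdist y w, 0))); simpl.
  intros w Uw; destruct (HU _ Uw) as [r [Hr Hball]]; exists r; split; auto.
  intros w' Hw'; apply Hball; rewrite cdist_real.
  eapply Rle_lt_trans; [apply dist_diff | exact Hw'].
Qed.

Lemma dist_to_bounded (T : Type) (Y : MetricSpace) (F : T -> Y) (y : Y) :
  compact_space (metric_top Y) -> C_bounded T (dist_to y F).
Proof.
  intros HY; destruct (compact_bounded Y HY y) as [B HB]; exists B; intros t.
  unfold dist_to; rewrite cnorm_real, Rabs_pos_eq; auto; apply mdist_nonneg.
Qed.

Lemma dist_to_extends_iff_higson (X Y : MetricSpace) (f : X -> Y) (y : Y)
  (K : TopSpace) (i : X -> K) :
  compact_space (metric_top Y) ->
  continuous (metric_top X) (metric_top Y) f ->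
  is_h0_compactification X K i ->
  (exists G : K -> Cplx, continuous_C K G /\ forall x, G (i x) = dist_to y f x)
  <-> higson_vanishing X (dist_to y f).
Proof.
  intros HY Hf [_ Hchar].
  pose proof (dist_to_bounded X Y f y HY) as Hbd.
  pose proof (dist_to_continuous (metric_top X) Y f y Hf) as Hc.
  rewrite <- (Hchar _ Hbd Hc); unfold C_h0; tauto.
Qed.

(* A uniformly continuous f has Higson distance functions: along a
   C_0-controlled set, d(x, x') is eventually small, hence so is
   |d(y, f x) - d(y, f x')| <= d(f x, f x'). *)
Lemma higson_distances_of_uc (X Y : MetricSpace) (f : X -> Y) :
  eps_delta_uc X Y f -> forall y, higson_vanishing X (dist_to y f).
Proof.
  intros Huc y E HE eps Heps.
  destruct (Huc (eps / 2)) as [d [Hd Hclose]]; [lra|].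
  destruct (HE d Hd) as [C [HC Hfar]]; exists C; split; auto.
  intros x x' Exx' Hout; unfold dist_to; rewrite cdist_real.
  eapply Rle_lt_trans; [apply dist_diff|].
  pose proof (Hclose x x' (Hfar x x' Exx' Hout)); lra.
Qed.

Lemma inv_succ_small (d : R) : 0 < d ->
  exists N, forall n, (N <= n)%nat -> / (INR n + 1) < d.
Proof.
  intros Hd; destruct (archimed_cor1 d Hd) as [N [HN HN0]]; exists N.
  intros n Hn; eapply Rle_lt_trans; [|exact HN].
  apply Rinv_le_contravar; [apply lt_0_INR; auto|].
  apply le_INR in Hn; lra.
Qed.

Lemma finite_compact (T : TopSpace) (a b : nat -> T) (N : nat) :
  compact_in T (fun z => exists n, (n < N)%nat /\ (z = a n \/ z = b n)).
Proof.
  intros F HF; induction N as [|N IH]; intros Hcov.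
  - exists nil; split; [intros U [] | intros x [n [Hn _]]; lia].
  - destruct IH as [l [Hl Hlcov]].
    { intros x [n [Hn Hx]]; apply Hcov; exists n; split; auto. }
    destruct (Hcov (a N)) as [Ua [FUa Ua']]; [exists N; auto|].
    destruct (Hcov (b N)) as [Ub [FUb Ub']]; [exists N; auto|].
    exists (Ua :: Ub :: l); split.
    + intros U [<- | [<- | HU]]; auto.
    + intros x [n [Hn Hx]]; destruct (Nat.eq_dec n N) as [-> | Hne].
      * destruct Hx as [-> | ->]; [exists Ua | exists Ub]; simpl; auto.
      * destruct (Hlcov x) as [U [HU Ux]]; [exists n; split; auto; lia|].
        exists U; simpl; auto.
Qed.

Lemma shrinking_pairs_controlled (X : MetricSpace) (a b : nat -> X) :
  (forall n, mdist (a n) (b n) < / (INR n + 1)) ->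
  C0_controlled X (fun u v => exists n, u = a n /\ v = b n).
Proof.
  intros Hab eta Heta; destruct (inv_succ_small eta Heta) as [N HN].
  exists (fun z => exists n, (n < N)%nat /\ (z = a n \/ z = b n)).
  split; [apply finite_compact|].
  intros u v [n [-> ->]] Hout; destruct (Compare_dec.le_lt_dec N n) as [Hle | Hlt].
  - eapply Rlt_trans; [apply Hab | apply HN; auto].
  - exfalso; apply Hout; split; exists n; auto.
Qed.

Lemma bad_pairs (X Y : MetricSpace) (f : X -> Y) (eps : R) :
  ~ (exists d, 0 < d /\ forall x x', mdist x x' < d -> mdist (f x) (f x') <= eps) ->
  exists a b : nat -> X, forall n,
    mdist (a n) (b n) < / (INR n + 1) /\ eps < mdist (f (a n)) (f (b n)).
Proof.
  intros Hnot.
  assert (Hpair : forall n : nat, exists p : X * X,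
             mdist (fst p) (snd p) < / (INR n + 1) /\
             eps < mdist (f (fst p)) (f (snd p))).
  { intros n; apply NNPP; intros Hno; apply Hnot; exists (/ (INR n + 1)); split.
    - apply Rinv_0_lt_compat; pose proof (pos_INR n); lra.
    - intros x x' Hxx'; apply Rnot_lt_le; intros Hlt; apply Hno; exists (x, x'); auto. }
  destruct (choice _ Hpair) as [p Hp].
  exists (fun n => fst (p n)), (fun n => snd (p n)); auto.
Qed.

(* If every d_y f is Higson, then f is uniformly continuous: for bad pairs
   (a_n, b_n), pick y near f(a_N); off a compact set d_y f varies by less
   than eps/2 along the pairs, and on it f is uniformly continuous.  A
   finite net of Y makes N independent of y. *)
Lemma uc_of_higson_distances (X Y : MetricSpace) (f : X -> Y) :
  compact_space (metric_top Y) ->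
  continuous (metric_top X) (metric_top Y) f ->
  (forall y, higson_vanishing X (dist_to y f)) -> eps_delta_uc X Y f.
Proof.
  intros HY Hf Hhig eps Heps; apply NNPP; intros Hnot.
  destruct (bad_pairs X Y f eps Hnot) as [a [b Hab]].
  set (E := fun u v => exists n, u = a n /\ v = b n).
  assert (HE : C0_controlled X E)
    by (apply shrinking_pairs_controlled; intros n; apply Hab).
  destruct (compact_net Y HY (eps / 4) ltac:(lra)) as [ys Hys].
  destruct (list_ex_min ys (fun y d => exists C,
      (forall u v, E u v -> ~ (C u /\ C v) ->
         cdist (dist_to y f u) (dist_to y f v) < eps / 2) /\
      (forall u v, C u -> C v -> mdist u v < d -> mdist (f u) (f v) < eps)))
    as [d [Hd Hgood]].
  - intros y d d' [C [H1 H2]] Hd'; exists C; split; auto.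
    intros u v Cu Cv Huv; apply H2; auto; lra.
  - intros y _; destruct (Hhig y E HE (eps / 2)) as [C [HC Hfar]]; [lra|].
    destruct (heine_cantor X Y f Hf C HC eps Heps) as [d [Hd Hnear]].
    exists d; split; eauto.
  - destruct (inv_succ_small d Hd) as [N HN].
    destruct (Hab N) as [Hclose Hspread].
    destruct (Hys (f (a N))) as [y [Hy Hya]].
    destruct (Hgood y Hy) as [C [Hfar Hnear]].
    destruct (classic (C (a N) /\ C (b N))) as [[Ca Cb] | Hout].
    + pose proof (Hnear _ _ Ca Cb (Rlt_trans _ _ _ Hclose (HN N (le_n N)))); lra.
    + pose proof (Hfar (a N) (b N) ltac:(exists N; auto) Hout) as Hvar.
      unfold dist_to in Hvar; rewrite cdist_real in Hvar; apply Rabs_def2 in Hvar.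
      pose proof (mdist_tri Y (f (a N)) y (f (b N))).
      rewrite (mdist_sym Y (f (a N)) y) in *; lra.
Qed.

Lemma dense_closed_relation (X : Type) (K : TopSpace) (i : X -> K)
  (Hdense : forall V : K -> Prop, topen V -> (exists k, V k) -> exists x, V (i x))
  (A B : K -> Cplx) (Q : R -> R -> Prop) :
  continuous_C K A -> continuous_C K B ->
  (forall a b, ~ Q a b -> exists r, 0 < r /\
     forall a' b', Rabs (a' - a) < r -> Rabs (b' - b) < r -> ~ Q a' b') ->
  (forall x, Q (fst (A (i x))) (fst (B (i x)))) ->
  forall k, Q (fst (A k)) (fst (B k)).
Proof.
  intros HA HB Hclosed Hx k; apply NNPP; intros Hn.
  destruct (Hclosed _ _ Hn) as [r [Hr Hnear]].
  destruct (Hdense (fun k' => Rabs (fst (A k') - fst (A k)) < r /\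
                              Rabs (fst (B k') - fst (B k)) < r)) as [x [H1 H2]].
  - apply topen_inter; [apply (HA _ (Copen_fst_near _ _)) | apply (HB _ (Copen_fst_near _ _))].
  - exists k; unfold Rminus; rewrite !Rplus_opp_r, Rabs_R0; auto.
  - exact (Hnear _ _ H1 H2 (Hx x)).
Qed.

Section Reconstruction.

Variables (X : Type) (Y : MetricSpace) (f : X -> Y) (K : TopSpace) (i : X -> K).
Hypothesis Hdense :
  forall V : K -> Prop, topen V -> (exists k, V k) -> exists x, V (i x).
Hypothesis HY : compact_space (metric_top Y).
Variable G : Y -> K -> Cplx.
Hypothesis HGc : forall y, continuous_C K (G y).
Hypothesis HGi : forall y x, G y (i x) = dist_to y f x.

(* the candidate distance from y to the (unknown) image of k *)
Let h (k : K) (y : Y) : R := fst (G y k).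

(* The inequalities satisfied by d(-, f x) pass to every h k by density. *)
Lemma h_nonneg k y : 0 <= h k y.
Proof.
  apply (dense_closed_relation X K i Hdense (G y) (G y) (fun a _ => 0 <= a)); auto.
  - intros a b Hn; exists (- a); split; [lra|].
    intros a' b' Ha _; apply Rabs_def2 in Ha; lra.
  - intros x; rewrite HGi; apply mdist_nonneg.
Qed.

Lemma h_lipschitz k y y' : h k y <= h k y' + mdist y y'.
Proof.
  apply (dense_closed_relation X K i Hdense (G y) (G y')
           (fun a b => a <= b + mdist y y')); auto.
  - intros a b Hn; exists ((a - b - mdist y y') / 2); split; [lra|].
    intros a' b' Ha Hb; apply Rabs_def2 in Ha; apply Rabs_def2 in Hb; lra.
  - intros x; rewrite !HGi; simpl; pose proof (mdist_tri Y y y' (f x)); lra.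
Qed.

Lemma h_triangle k y y' : mdist y y' <= h k y + h k y'.
Proof.
  apply (dense_closed_relation X K i Hdense (G y) (G y')
           (fun a b => mdist y y' <= a + b)); auto.
  - intros a b Hn; exists ((mdist y y' - a - b) / 2); split; [lra|].
    intros a' b' Ha Hb; apply Rabs_def2 in Ha; apply Rabs_def2 in Hb; lra.
  - intros x; rewrite !HGi; simpl; pose proof (mdist_tri Y y (f x) y').
    rewrite (mdist_sym Y (f x) y') in *; lra.
Qed.

(* inf_y h k y = 0: otherwise, a finite eps/2-net gives a neighbourhood of k
   missing f(X) at distance eps/2, contradicting density. *)
Lemma h_inf_zero k eps : 0 < eps -> exists y, h k y < eps.
Proof.
  intros Heps; apply NNPP; intros Hn.
  destruct (compact_net Y HY (eps / 2) ltac:(lra)) as [ys Hys].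
  destruct (Hdense (fun k' => forall y, In y ys -> eps / 2 < fst (G y k'))) as [x Hx].
  - apply (topen_list_inter K ys (fun y k' => eps / 2 < fst (G y k'))).
    intros y; apply (HGc y _ (Copen_fst_gt _)).
  - exists k; intros y _.
    assert (~ h k y < eps) by (intros H; apply Hn; eauto); unfold h in *; lra.
  - destruct (Hys (f x)) as [y [Hy Hyx]]; pose proof (Hx y Hy) as Hfar.
    rewrite HGi in Hfar; simpl in Hfar; lra.
Qed.

(* By compactness of Y and the Lipschitz bound, the infimum is attained. *)
Lemma h_zero k : exists y0, h k y0 = 0.
Proof.
  apply NNPP; intros Hn.
  assert (Hpos : forall y, 0 < h k y).
  { intros y; destruct (h_nonneg k y) as [H | H]; auto; exfalso; apply Hn; eauto. }
  destruct (HY (fun U => exists y, U = fun z => mdist y z < h k y / 2))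
    as [l [Hl Hcov]].
  - intros U [y ->]; apply ball_open.
  - intros z _; exists (fun w => mdist z w < h k z / 2); split; [eauto|].
    simpl; rewrite mdist_refl; pose proof (Hpos z); lra.
  - destruct (list_ex_min l (fun U m => exists y,
                U = (fun z => mdist y z < h k y / 2) /\ m <= h k y / 2))
      as [m [Hm Hball]].
    + intros U m m' [y [H1 H2]] Hm'; exists y; split; auto; lra.
    + intros U HU; destruct (Hl U HU) as [y ->]; exists (h k y / 2).
      split; [pose proof (Hpos y); lra | exists y; split; auto; lra].
    + destruct (h_inf_zero k m Hm) as [y Hy].
      destruct (Hcov y I) as [U [HU Uy]]; destruct (Hball U HU) as [y1 [-> Hm1]].
      simpl in Uy; pose proof (h_lipschitz k y1 y); lra.
Qed.

(* The point where h k vanishes is the value of the extension at k; then h k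
   is exactly the distance to it. *)
Lemma h_is_distance (F : K -> Y) (HF0 : forall k, h k (F k) = 0) :
  forall k y, h k y = mdist y (F k).
Proof.
  intros k y; pose proof (h_lipschitz k y (F k)); pose proof (h_triangle k y (F k)).
  rewrite HF0 in *; lra.
Qed.

Lemma extension_from_distance_functions :
  exists F : K -> Y, continuous K (metric_top Y) F /\ forall x, F (i x) = f x.
Proof.
  destruct (choice _ h_zero) as [F HF0].
  pose proof (h_is_distance F HF0) as Hdist.
  exists F; split.
  - intros V HV; apply topen_local; intros k Vk.
    destruct (HV _ Vk) as [r [Hr Hball]].
    exists (fun k' => h k' (F k) < r); split; [|split].
    + apply (HGc (F k) _ (Copen_fst_lt r)).
    + rewrite HF0; auto.
    + intros k' Hk'; apply Hball; rewrite Hdist in Hk'; auto.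
  - intros x; pose proof (Hdist (i x) (f x)) as H.
    unfold h in H; rewrite HGi in H; unfold dist_to in H; simpl in H.
    rewrite mdist_refl in H; symmetry in H; apply mdist_eq0 in H; auto.
Qed.

End Reconstruction.

Theorem corollary3p5 (X Y : MetricSpace) (f : X -> Y)
  (HXproper : proper_metric X) (HXgeod : geodesic X)
  (HYcpt : compact_space (metric_top Y))
  (Hfcont : continuous (metric_top X) (metric_top Y) f)
  (K : TopSpace) (i : X -> K) (Hh0 : is_h0_compactification X K i) :
  (exists F : K -> Y, continuous K (metric_top Y) F /\ forall x, F (i x) = f x)
  <-> uniformly_continuous X Y f.
Proof.
  pose proof (fun y => dist_to_extends_iff_higson X Y f y K i HYcpt Hfcont Hh0)
    as Hextends.
  split.
  - intros [F [HF HFi]].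
    destruct (compact_diameter Y HYcpt) as [D [HD0 HD]].
    apply (eps_delta_uniformly_continuous X Y f D HD0 HD).
    apply uc_of_higson_distances; auto.
    intros y; apply Hextends; exists (dist_to y F); split.
    + apply dist_to_continuous; auto.
    + intros x; unfold dist_to; rewrite HFi; reflexivity.
  - intros Huc.
    destruct Hh0 as [[_ [_ [_ [_ [_ Hdense]]]]] _].
    assert (HG : forall y, exists G, continuous_C K G /\
                   forall x, G (i x) = dist_to y f x).
    { intros y; apply Hextends, higson_distances_of_uc,
        uniformly_continuous_eps_delta; auto. }
    destruct (choice _ HG) as [G HGy].
    apply (extension_from_distance_functions X Y f K i Hdense HYcpt G);
      intros y; apply HGy.
Qed.
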